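(* Under the setting described in the context (conditions (V), (S), (C), compactly supported initial measure $\mu_0$, lattice approximate solution $\mu^N_t$), there is a compact set $K_V\subseteq\mathbb{R}^d\times\mathbb{R}^d$, independent of $l$ and $N$, such that $\operatorname{supp}V[\mu^N_{t_l}]\subseteq K_V$ for all $l$ and all (sufficiently large) $N$.
   Context: $\mathcal{M}^+(\mathbb{R}^k)$: finite nonnegative Borel measures; $\|f\|_{BL}=\max(\sup|f|,\operatorname{Lip}f)$, $\|\mu\|_{BL^*}=\sup\{\int\psi\,d\mu:\|\psi\|_{BL}\le1\}$. Conditions: (V) $V:\mathcal{M}^+(\mathbb{R}^d)\to\mathcal{M}^+(\mathbb{R}^d\times\mathbb{R}^d)$, $\pi_1^{\#}V[\mu]=\mu$; (V1) $\sup_{(x,v)\in\operatorname{supp}V[\mu]}|v|\le C_S(1+\sup_{(x,v)\in\operatorname{supp}V[\mu]}|x|)$; (V2) for each $R'>0$, $\|V[\mu]-V[\nu]\|_{BL^*}\le C_F(R')\|\mu-\nu\|_{BL^*}$ for $\mu,\nu$ supported in $B(0,R')$. (S) $s:\mathcal{M}^+(\mathbb{R}^d)\to\mathcal{M}^+(\mathbb{R}^d)$, (S1) $\|s[\mu]-s[\nu]\|_{BL^*}\le L\|\mu-\nu\|_{BL^*}$, (S2) $\operatorname{supp}s[\mu]\subseteq B(0,R)$ for all $\mu$. (C) $c:\mathbb{R}^d\times\mathcal{M}^+(\mathbb{R}^d)\to\mathbb{R}$, (C1) $|c|\le C_b$, (C2) $|c(x,\mu)-c(y,\nu)|\le C_L(|x-y|+\|\mu-\nu\|_{BL^*})$.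 Lattice scheme: fix $T>0$; $\Delta_N=1/N$; $x_1,\dots,x_I$ enumerate $(N^{-2}\mathbb{Z}^d)\cap[-N,N]^d$, $v_1,\dots,v_J$ enumerate $(N^{-1}\mathbb{Z}^d)\cap[-N,N]^d$; $Q_i=x_i+[0,\Delta_N^2)^d$, $Q'_j=v_j+[0,\Delta_N)^d$; $m_i^x(\mu)=\mu(Q_i)$, $m_{ij}^v(W)=W(Q_i\times Q'_j)$. Time points $t_l=l/N$, $l=0,\dots,M$, with the intervals $[t_l,t_{l+1})$ ($l<M$) and $[t_M,T]$ covering $[0,T]$, each of length at most $\Delta_N$. Set $\mu^N_0=\sum_i m_i^x(\mu_0)\delta_{x_i}$ and for $\tau\in[0,\Delta_N]$: $\mu^N_{t_l+\tau}=\tau\sum_i m_i^x(s[\mu^N_{t_l}])\delta_{x_i}+\sum_{i,j}m_{ij}^v(V[\mu^N_{t_l}])e^{c(x_i,\mu^N_{t_l})\tau}\delta_{x_i+\tau v_j}$. *)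

From HB Require Import structures.
From mathcomp Require Import all_boot all_order all_algebra.
From mathcomp Require Import all_classical all_reals all_analysis.
Set Implicit Arguments. Unset Strict Implicit. Unset Printing Implicit Defensive.
Import Order.TTheory GRing.Theory Num.Theory.
Import numFieldNormedType.Exports.
Local Open Scope classical_set_scope.
Local Open Scope ring_scope.

Notation Borel X := (g_sigma_algebraType (@open X)).

Notation Mplus R X := {finite_measure set (Borel X) -> \bar R}.

Definition enorm (R : realType) (d : nat) (x : 'rV[R]_d) : R :=
  Num.sqrt (\sum_(i < d) x ord0 i ^+ 2).

Definition dist1 (R : realType) (d : nat) (x y : 'rV[R]_d) : R := enorm (x - y).
Definition dist2 (R : realType) (d : nat) (p q : 'rV[R]_d * 'rV[R]_d) : R :=
  Num.sqrt (enorm (p.1 - q.1) ^+ 2 + enorm (p.2 - q.2) ^+ 2).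

Definition eball0 (R : realType) (d : nat) (r : R) : set 'rV[R]_d :=
  [set x | enorm x < r].

(* Test functions with ||psi||_BL = max(sup|psi|, Lip psi) <= 1 w.r.t. dist. *)
Definition BL1 (R : realType) (X : Type) (dist : X -> X -> R) (psi : X -> R) : Prop :=
  (forall x, `|psi x| <= 1) /\ (forall x y, `|psi x - psi y| <= dist x y).

Definition bl_dist (R : realType) (dd : measure_display) (T : measurableType dd)
  (dist : T -> T -> R) (mu nu : {finite_measure set T -> \bar R}) : \bar R :=
  ereal_sup [set (\int[mu]_x (psi x)%:E - \int[nu]_x (psi x)%:E)%E | psi in BL1 dist].

Definition msupp (R : realType) (dd : measure_display) (T : measurableType dd)
  (op : set (set T)) (mu : {finite_measure set T -> \bar R}) : set T :=
  [set x | forall U : set T, op U -> U x -> (0 < mu U)%E].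

Definition bl1 (R : realType) (d : nat) (mu nu : Mplus R 'rV[R]_d) : \bar R :=
  @bl_dist R _ (Borel 'rV[R]_d) (@dist1 R d) mu nu.
Definition bl2 (R : realType) (d : nat) (mu nu : Mplus R ('rV[R]_d * 'rV[R]_d)%type) : \bar R :=
  @bl_dist R _ (Borel ('rV[R]_d * 'rV[R]_d)%type) (@dist2 R d) mu nu.
Definition supp1 (R : realType) (d : nat) (mu : Mplus R 'rV[R]_d) : set 'rV[R]_d :=
  @msupp R _ (Borel 'rV[R]_d) (@open 'rV[R]_d) mu.
Definition supp2 (R : realType) (d : nat) (mu : Mplus R ('rV[R]_d * 'rV[R]_d)%type)
  : set ('rV[R]_d * 'rV[R]_d)%type :=
  @msupp R _ (Borel ('rV[R]_d * 'rV[R]_d)%type) (@open ('rV[R]_d * 'rV[R]_d)%type) mu.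

(* Lattice points x_k in (N^{-2} Z^d) cap [-N,N]^d, indexed by k : 'I_d -> {0..2N^3}. *)
Definition xpt (R : realType) (d N : nat) (k : {ffun 'I_d -> 'I_(2 * N ^ 3).+1}) : 'rV[R]_d :=
  \row_j (((k j)%:R - (N ^ 3)%:R) / (N ^ 2)%:R).

(* Velocity lattice points v_k in (N^{-1} Z^d) cap [-N,N]^d, k : 'I_d -> {0..2N^2}. *)
Definition vpt (R : realType) (d N : nat) (k : {ffun 'I_d -> 'I_(2 * N ^ 2).+1}) : 'rV[R]_d :=
  \row_j (((k j)%:R - (N ^ 2)%:R) / N%:R).

Definition hcube (R : realType) (d : nat) (z : 'rV[R]_d) (h : R) : set 'rV[R]_d :=
  [set y | forall j : 'I_d, z ord0 j <= y ord0 j < z ord0 j + h].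

Definition mx (R : realType) (d N : nat) (mu : Mplus R 'rV[R]_d)
  (k : {ffun 'I_d -> 'I_(2 * N ^ 3).+1}) : R :=
  fine (mu (hcube (xpt R k) (1 / (N ^ 2)%:R))).

Definition mv (R : realType) (d N : nat) (W : Mplus R ('rV[R]_d * 'rV[R]_d)%type)
  (k : {ffun 'I_d -> 'I_(2 * N ^ 3).+1}) (k' : {ffun 'I_d -> 'I_(2 * N ^ 2).+1}) : R :=
  fine (W (hcube (xpt R k) (1 / (N ^ 2)%:R) `*` hcube (vpt R k') (1 / N%:R))).

(* mu : nat -> M^+ is the lattice approximate solution at the time points t_l = l/N:
   mu l = mu^N_{t_l}.  Measures are specified by their values on Borel sets;
   delta_z(A) = \1_A z. *)
Definition lattice_scheme (R : realType) (d : nat)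
  (V : Mplus R 'rV[R]_d -> Mplus R ('rV[R]_d * 'rV[R]_d)%type)
  (s : Mplus R 'rV[R]_d -> Mplus R 'rV[R]_d)
  (c : 'rV[R]_d -> Mplus R 'rV[R]_d -> R)
  (mu0 : Mplus R 'rV[R]_d) (N : nat) (mu : nat -> Mplus R 'rV[R]_d) : Prop :=
  (forall A : set (Borel 'rV[R]_d), measurable A ->
     mu 0%N A = (\sum_(k : {ffun 'I_d -> 'I_(2 * N ^ 3).+1}) mx mu0 k * \1_A (xpt R k))%:E) /\
  (forall (l : nat) (A : set (Borel 'rV[R]_d)), measurable A ->
     mu l.+1 A =
       ((1 / N%:R) * (\sum_(k : {ffun 'I_d -> 'I_(2 * N ^ 3).+1}) mx (s (mu l)) k * \1_A (xpt R k))
        + \sum_(k : {ffun 'I_d -> 'I_(2 * N ^ 3).+1})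
            \sum_(k' : {ffun 'I_d -> 'I_(2 * N ^ 2).+1}) (mv (V (mu l)) k k' * expR (c (xpt R k) (mu l) * (1 / N%:R))
                          * \1_A (xpt R k + (1 / N%:R) *: vpt R k')))%:E).

(* The approximate measures are finite sums of Dirac masses, and an atom at a
   lattice point carries mass only if its cell does; the closed cell being
   compact, it then contains a point of the support of the measure the cell mass
   was taken from.  Hence, with t = 1/N, the support of mu_(l+1) is controlled by
   that of mu_l: source atoms lie near supp s[mu_l], inside B(0, Rs) by (S2),
   and transported atoms x_i + t v_j have |v_j| <= C_S (1 + |x_i|) + t by (V)
   and (V1).  A coordinate bound r_l on supp mu_l therefore propagates as
   r_(l+1) = r_l (1 + kappa t), so r_l <= r_0 exp(kappa T) whenever l t <= T,
   and (V1) once more bounds the velocity components of supp V[mu_l]. *)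

From HB Require Import structures.
From mathcomp Require Import all_boot all_order all_algebra.
From mathcomp Require Import all_classical all_reals all_analysis.
From mathcomp Require Import lra.
Set Implicit Arguments. Unset Strict Implicit. Unset Printing Implicit Defensive.
Import Order.TTheory GRing.Theory Num.Theory.
Import numFieldNormedType.Exports.
Local Open Scope classical_set_scope.
Local Open Scope ring_scope.

Section BorelSupport.
Variables (R : realType) (X : ptopologicalType).
Implicit Types (m : Mplus R X) (A B : set X).
Local Notation supp m := (@msupp R _ (Borel X) (@open X) m).

Lemma open_Borel_measurable A : open A -> measurable (A : set (Borel X)).
Proof. exact: sub_sigma_algebra. Qed.

Lemma continuous_lt_measurable (f : X -> R) (a : R) :
  continuous f -> measurable ([set x | f x < a] : set (Borel X)).
Proof.
move=> /continuousP cf; apply: open_Borel_measurable.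
by have := cf [set y | y < a] (@open_lt R a).
Qed.

Lemma continuous_box_measurable (I : finType) (f : I -> X -> R) (a b : I -> R) :
  (forall i, continuous (f i)) ->
  measurable ([set x | forall i, a i <= f i x < b i] : set (Borel X)).
Proof.
move=> cf.
have -> : [set x | forall i, a i <= f i x < b i] =
    \bigcap_(i in [set: I]) (~` [set x | f i x < a i] `&` [set x | f i x < b i]).
  apply/seteqP; split => x /=.
    by move=> H i _; have /andP[] := H i; rewrite leNgt => /negP.
  by move=> H i; have [/negP + ->] := H i Logic.I; rewrite -leNgt => ->.
apply: fin_bigcap_measurable; first exact: finite_finset.
by move=> i _; apply: measurableI; [apply: measurableC|];
  exact: continuous_lt_measurable.
Qed.

Lemma msupp_meets_compact m B (A : set (Borel X)) :
  compact B -> A `<=` B -> measurable A -> m A != 0%E ->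
  exists2 x, B x & supp m x.
Proof.
move=> cB AB mA mA0; apply: contrapT => noB; move: mA0; apply/negP; rewrite negbK.
have null_nbhd x : exists U : set X, [/\ open U, m U = 0%E & (B x -> U x)].
  have [Bx|nBx] := pselect (B x); last by exists set0; split => //; exact: open0.
  have /existsNP[U /not_implyP[oU /not_implyP[Ux /negP]]] : ~ supp m x.
    by move=> Sx; apply: noB; exists x.
  rewrite -leNgt => mU0; exists U; split => //.
  by apply/eqP; rewrite eq_le mU0 measure_ge0.
have [U HU] := choice null_nbhd.
move: cB; rewrite compact_cover => /(_ X B U) [].
- by move=> x _; case: (HU x).
- by move=> x Bx; exists x => //; case: (HU x) => _ _; apply.
move=> D _ cov; rewrite eq_le measure_ge0 andbT.
rewrite (le_trans (@content_sub_fsum _ _ _ m X _ A U (finite_fset D) _ mA _)) //.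
- by move=> x _; apply: open_Borel_measurable; case: (HU x).
- by move=> x /AB /cov.
by rewrite fsbig1 // => x _; case: (HU x).
Qed.

Lemma msupp_sub_finite m (S : set X) : hausdorff_space X -> finite_set S ->
  (forall A : set (Borel X), measurable A -> S `<=` ~` A -> m A = 0%E) ->
  supp m `<=` S.
Proof.
move=> hX fS mS0 y Sy; apply: contrapT => nSy.
have oU : open (~` S) by apply/closed_openC/(compact_closed hX)/finite_compact.
have := Sy _ oU nSy.
by rewrite mS0 ?ltxx ?setCK //; exact: open_Borel_measurable.
Qed.

End BorelSupport.

Lemma sum_sqr_le_sqr_sum (R : realFieldType) (I : Type) (r : seq I) (f : I -> R) :
  (forall i, 0 <= f i) -> \sum_(i <- r) f i ^+ 2 <= (\sum_(i <- r) f i) ^+ 2.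
Proof.
move=> f0; elim: r => [|a r IH]; first by rewrite !big_nil expr0n.
rewrite !big_cons.
have S0 : 0 <= \sum_(i <- r) f i by rewrite sumr_ge0.
have := f0 a; nra.
Qed.

Lemma exprn_1D_le_expR (R : realType) (x : R) n :
  0 <= x -> (1 + x) ^+ n <= expR (n%:R * x).
Proof.
move=> x0; rewrite expRM_natl; apply: lerXn2r; rewrite ?nnegrE ?expR_ge0 //.
  by rewrite addr_ge0.
exact: expR_ge1Dx.
Qed.

Lemma fst_continuous (X Y : topologicalType) : continuous (@fst X Y).
Proof. by move=> p; exact: cvg_fst. Qed.

Lemma snd_continuous (X Y : topologicalType) : continuous (@snd X Y).
Proof. by move=> p; exact: cvg_snd. Qed.

Section RowGeometry.
Variables (R : realType) (d : nat).
Implicit Types (y z : 'rV[R]_d) (h r : R).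

Definition ccube z h : set 'rV[R]_d :=
  [set y | forall j, z ord0 j <= y ord0 j <= z ord0 j + h].

Definition coord_ball r : set 'rV[R]_d := [set y | forall j, `|y ord0 j| <= r].

Lemma ccube_compact z h : compact (ccube z h).
Proof.
have -> : ccube z h =
    [set y | forall j, `[z ord0 j, z ord0 j + h]%classic (y ord0 j)].
  by apply/seteqP; split => y /= H j; move: (H j); rewrite /= in_itv.
by apply: (@rV_compact _ _ (fun j => _)) => j; exact: segment_compact.
Qed.

Lemma coord_ball_compact r : compact (coord_ball r).
Proof.
have -> : coord_ball r = [set y | forall j, `[- r, r]%classic (y ord0 j)].
  by apply/seteqP; split => y /= H j; move: (H j); rewrite /= in_itv /= ler_norml.
by apply: (@rV_compact _ _ (fun j => _)) => j; exact: segment_compact.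
Qed.

Lemma coord_ball_le r r' : r <= r' -> coord_ball r `<=` coord_ball r'.
Proof. by move=> rr' y yr j; exact: le_trans (yr j) rr'. Qed.

Lemma hcube_sub_ccube z h : hcube z h `<=` ccube z h.
Proof. by move=> y H j; have /andP[-> /ltW ->] := H j. Qed.

Lemma hcube_measurable z h : measurable (hcube z h : set (Borel 'rV[R]_d)).
Proof.
apply: (@continuous_box_measurable _ _ _ (fun j y => y ord0 j)) => j.
exact: coord_continuous.
Qed.

Lemma ccube_coord_le z h y j :
  0 <= h -> ccube z h y -> `|z ord0 j| <= `|y ord0 j| + h.
Proof.
move=> h0 /(_ j) /andP[zy yz].
have : `|z ord0 j - y ord0 j| <= h by rewrite ler_norml; apply/andP; split; lra.
have := ler_normD (z ord0 j - y ord0 j) (y ord0 j); rewrite subrK; lra.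
Qed.

Lemma coord_le_enorm y j : `|y ord0 j| <= enorm y.
Proof.
rewrite /enorm -sqrtr_sqr ler_sqrt; last by rewrite sumr_ge0 // => i _; rewrite sqr_ge0.
by rewrite (bigD1 j) //= lerDl sumr_ge0 // => i _; rewrite sqr_ge0.
Qed.

Lemma enorm_le_coord_ball r y : coord_ball r y -> enorm y <= d%:R * r.
Proof.
move=> yr; have S0 : 0 <= \sum_j `|y ord0 j| by rewrite sumr_ge0.
apply: (@le_trans _ _ (\sum_j `|y ord0 j|)).
  rewrite /enorm -(ger0_norm S0) -sqrtr_sqr ler_sqrt ?sqr_ge0 //.
  apply: le_trans (sum_sqr_le_sqr_sum _ (fun j => normr_ge0 (y ord0 j))).
  by apply: ler_sum => j _; rewrite real_normK // num_real.
by apply: le_trans (ler_sum _ (fun j _ => yr j)) _; rewrite sumr_const card_ord mulr_natl.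
Qed.

Lemma coord_le_norm y j : `|y ord0 j| <= `|y|.
Proof.
rewrite [leRHS]/Num.norm /= mx_normrE; apply/bigmax_geP; right => /=.
by exists (ord0, j).
Qed.

Lemma compact_sub_coord_ball (A : set 'rV[R]_d) :
  compact A -> exists r, A `<=` coord_ball r.
Proof.
move=> /compact_bounded [M [_ AM]]; exists (M + 1) => y Ay j.
by apply: le_trans (coord_le_norm y j) _; apply: AM; rewrite ?ltrDl.
Qed.

End RowGeometry.
Arguments coord_ball {R} d r.

Section PhaseSpace.
Variables (R : realType) (d : nat).
Local Notation Rd := 'rV[R]_d.
Local Notation RdRd := (((Rd * Rd)%type : normedModType R) : ptopologicalType).

Lemma hcubeX_measurable (z w : Rd) h h' :
  measurable (hcube z h `*` hcube w h' : set (Borel RdRd)).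
Proof.
apply: measurableI.
  apply: (@continuous_box_measurable _ _ _ (fun j (p : RdRd) => p.1 ord0 j)) => j.
  move=> p; apply: (@continuous_comp _ _ _ fst (fun M : Rd => M ord0 j)).
    exact: fst_continuous.
  exact: coord_continuous.
apply: (@continuous_box_measurable _ _ _ (fun j (p : RdRd) => p.2 ord0 j)) => j.
move=> p; apply: (@continuous_comp _ _ _ snd (fun M : Rd => M ord0 j)).
  exact: snd_continuous.
exact: coord_continuous.
Qed.

Lemma supp2_fst (mu : Mplus R Rd) (W : Mplus R (Rd * Rd)%type) :
  (forall A : set (Borel Rd), measurable A -> W (A `*` setT) = mu A) ->
  forall p, supp2 W p -> supp1 mu p.1.
Proof.
move=> HW p Wp U oU Up; rewrite -HW; last exact: open_Borel_measurable.
apply: Wp => //; have -> : U `*` setT = fst @^-1` U :> set (Rd * Rd).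
  by apply/seteqP; split => q //= [].
by move/continuousP: (@fst_continuous Rd Rd); apply.
Qed.

Lemma msupp_meets_hcube (m : Mplus R Rd) (z : Rd) h :
  fine (m (hcube z h)) != 0 -> exists2 y, ccube z h y & supp1 m y.
Proof.
move=> m0; apply: (@msupp_meets_compact R Rd m _ _ (@ccube_compact _ _ z h)
  (@hcube_sub_ccube _ _ z h) (hcube_measurable z h)).
by apply: contra m0 => /eqP ->.
Qed.

Lemma msupp_meets_hcubeX (W : Mplus R (Rd * Rd)%type) (z w : Rd) h h' :
  fine (W (hcube z h `*` hcube w h')) != 0 ->
  exists2 p, (ccube z h `*` ccube w h') p & supp2 W p.
Proof.
move=> W0; apply: (@msupp_meets_compact R RdRd W _ _ _ _ (hcubeX_measurable z w h h')).
- by apply: compact_setX; exact: ccube_compact.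
- by move=> p [/hcube_sub_ccube ? /hcube_sub_ccube ?].
- by apply: contra W0 => /eqP ->.
Qed.

Lemma supp2_snd_bound (W : Mplus R (Rd * Rd)%type) (C r : R) :
  (ereal_sup [set (enorm p.2)%:E | p in supp2 W]
     <= C%:E * (1%:E + ereal_sup [set (enorm p.1)%:E | p in supp2 W]))%E ->
  (forall p, supp2 W p -> enorm p.1 <= r) ->
  forall p, supp2 W p -> enorm p.2 <= Num.max C 0 * (1 + r).
Proof.
move=> HW Hr p Wp.
set s1 := ereal_sup [set (enorm p.1)%:E | p in supp2 W].
have s1_ge : ((enorm p.1)%:E <= s1)%E by apply: ereal_sup_ubound; exists p.
have s1_le : (s1 <= r%:E)%E.
  by apply: ge_ereal_sup => _ [q Wq <-]; rewrite lee_fin; exact: Hr.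
have s1_fin : s1 \is a fin_num.
  by apply/fin_numPlt; rewrite (lt_le_trans _ s1_ge) ?ltNyr // (le_lt_trans s1_le) ?ltry.
have s1E : s1 = (fine s1)%:E by rewrite fineK.
have s1_ge0 : 0 <= fine s1 by rewrite -lee_fin -s1E (le_trans _ s1_ge) // lee_fin sqrtr_ge0.
have s1_ler : fine s1 <= r by rewrite -lee_fin -s1E.
have : ((enorm p.2)%:E <= C%:E * (1%:E + s1))%E.
  by apply: le_trans HW; apply: ereal_sup_ubound; exists p.
rewrite s1E -EFinD -EFinM lee_fin => /le_trans; apply.
have CC' : C <= Num.max C 0 by rewrite le_max lexx.
have C'0 : 0 <= Num.max C 0 by rewrite le_max lexx orbT.
set C' := Num.max C 0 in CC' C'0 *; nra.
Qed.

End PhaseSpace.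

Section VelocityBound.
Variables (R : realType) (d : nat) (V : Mplus R 'rV[R]_d -> Mplus R ('rV[R]_d * 'rV[R]_d)%type)
  (C_S : R).
Hypothesis HV : forall (mu : Mplus R 'rV[R]_d) (A : set (Borel 'rV[R]_d)),
  measurable A -> V mu (A `*` setT) = mu A.
Hypothesis HV1 : forall mu : Mplus R 'rV[R]_d,
  (ereal_sup [set (enorm p.2)%:E | p in supp2 (V mu)]
     <= C_S%:E * (1%:E + ereal_sup [set (enorm p.1)%:E | p in supp2 (V mu)]))%E.

Lemma supp_V_sub mu r : supp1 mu `<=` coord_ball d r ->
  supp2 (V mu) `<=` coord_ball d r `*` coord_ball d (Num.max C_S 0 * (1 + d%:R * r)).
Proof.
move=> mur p Vp; have fst_r q : supp2 (V mu) q -> coord_ball d r q.1.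
  by move=> Vq; apply: mur; exact: supp2_fst (HV mu) _ Vq.
split; first exact: fst_r.
move=> j; apply: le_trans (coord_le_enorm p.2 j) _.
apply: supp2_snd_bound (HV1 mu) _ _ Vp => q /fst_r.
exact: enorm_le_coord_ball.
Qed.

End VelocityBound.

Section LatticeScheme.
Variables (R : realType) (d : nat)
  (V : Mplus R 'rV[R]_d -> Mplus R ('rV[R]_d * 'rV[R]_d)%type)
  (s : Mplus R 'rV[R]_d -> Mplus R 'rV[R]_d)
  (c : 'rV[R]_d -> Mplus R 'rV[R]_d -> R)
  (mu0 : Mplus R 'rV[R]_d) (N : nat) (mu : nat -> Mplus R 'rV[R]_d).
Hypothesis hs : lattice_scheme V s c mu0 N mu.
Local Notation KX := {ffun 'I_d -> 'I_(2 * N ^ 3).+1}.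
Local Notation KV := {ffun 'I_d -> 'I_(2 * N ^ 2).+1}.

Lemma supp_scheme0 : supp1 (mu 0%N) `<=`
  [set xpt R k | k in [set k : KX | mx mu0 k != 0]].
Proof.
apply: msupp_sub_finite; [exact: norm_hausdorff | exact/finite_image/finite_finset|].
move=> A mA AS0; rewrite (hs.1 A mA); congr (_%:E); apply: big1 => k _.
have [->|mk0] := eqVneq (mx mu0 k) 0; first by rewrite mul0r.
by rewrite indicE memNset ?mulr0 //; apply: AS0; exists k.
Qed.

Lemma supp_schemeS l : supp1 (mu l.+1) `<=`
  [set xpt R k | k in [set k : KX | mx (s (mu l)) k != 0]] `|`
  [set xpt R kk.1 + (1 / N%:R) *: vpt R kk.2
    | kk in [set kk : KX * KV | mv (V (mu l)) kk.1 kk.2 != 0]].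
Proof.
apply: msupp_sub_finite; first exact: norm_hausdorff.
  by rewrite finite_setU; split; apply/finite_image/finite_finset.
move=> A mA AS0; rewrite (hs.2 l A mA); congr (_%:E).
rewrite big1 ?mulr0 ?add0r => [|k _]; last first.
  have [->|mk0] := eqVneq (mx (s (mu l)) k) 0; first by rewrite mul0r.
  by rewrite indicE memNset ?mulr0 //; apply: AS0; left; exists k.
apply: big1 => k _; apply: big1 => k' _.
have [->|mk0] := eqVneq (mv (V (mu l)) k k') 0; first by rewrite !mul0r.
by rewrite indicE memNset ?mulr0 //; apply: AS0; right; exists (k, k').
Qed.

End LatticeScheme.

Section LatticeSchemeBound.
Variables (R : realType) (d : nat)
  (V : Mplus R 'rV[R]_d -> Mplus R ('rV[R]_d * 'rV[R]_d)%type)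
  (s : Mplus R 'rV[R]_d -> Mplus R 'rV[R]_d)
  (c : 'rV[R]_d -> Mplus R 'rV[R]_d -> R)
  (C_S Rs : R) (mu0 : Mplus R 'rV[R]_d) (N : nat) (mu : nat -> Mplus R 'rV[R]_d).
Hypothesis HV : forall (mu : Mplus R 'rV[R]_d) (A : set (Borel 'rV[R]_d)),
  measurable A -> V mu (A `*` setT) = mu A.
Hypothesis HV1 : forall mu : Mplus R 'rV[R]_d,
  (ereal_sup [set (enorm p.2)%:E | p in supp2 (V mu)]
     <= C_S%:E * (1%:E + ereal_sup [set (enorm p.1)%:E | p in supp2 (V mu)]))%E.
Hypothesis HS2 : forall mu : Mplus R 'rV[R]_d, supp1 (s mu) `<=` eball0 Rs.
Hypothesis N_gt0 : (0 < N)%N.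
Hypothesis hs : lattice_scheme V s c mu0 N mu.

Let t : R := 1 / N%:R.
Let h : R := 1 / (N ^ 2)%:R.
Let Cp := Num.max C_S 0.
Let kappa := 2 + Cp + Cp * d%:R.

Let t_gt0 : 0 < t. Proof. by rewrite divr_gt0 ?ltr0n. Qed.
Let t_le1 : t <= 1. Proof. by rewrite ler_pdivrMr ?ltr0n // mul1r ler1n. Qed.
Let h_ge0 : 0 <= h. Proof. by rewrite divr_ge0 ?ler0n. Qed.
Let h_let : h <= t.
Proof.
rewrite /h /t natrX expr2 !mul1r lef_pV2 ?posrE ?mulr_gt0 ?ltr0n //.
by rewrite ler_peMr ?ler1n ?ler0n.
Qed.
Let Cp_ge0 : 0 <= Cp. Proof. by rewrite le_max lexx orbT. Qed.
Let kappa_t_ge0 : 0 <= kappa * t.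
Proof. by rewrite mulr_ge0 ?(ltW t_gt0) // /kappa !addr_ge0 ?mulr_ge0 ?ler0n. Qed.

Lemma supp_scheme0_bound r : supp1 mu0 `<=` coord_ball d r ->
  supp1 (mu 0%N) `<=` coord_ball d (r + 1).
Proof.
move=> mu0r y /(supp_scheme0 hs) [k /= mk0 <-] j.
have [z xz /mu0r/(_ j) zr] := msupp_meets_hcube mk0.
have := ccube_coord_le j h_ge0 xz; have := h_let; have := t_le1; lra.
Qed.

(* The slack [1] absorbs the distance, at most [h <= t <= 1], between a
   lattice point and the support point found in its cell. *)
Lemma supp_schemeS_bound l r : 1 <= r -> Rs + 2 <= r ->
  supp1 (mu l) `<=` coord_ball d (r - 1) ->
  supp1 (mu l.+1) `<=` coord_ball d (r * (1 + kappa * t) - 1).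
Proof.
move=> r1 rRs mur y /(supp_schemeS hs) [[k /= mk0 <-]|[[k k'] /= mk0 <-]] j.
  have [z xz /HS2 zRs] := msupp_meets_hcube mk0.
  have := ccube_coord_le j h_ge0 xz; have := coord_le_enorm z j.
  have : r <= r * (1 + kappa * t) by rewrite ler_peMr ?lerDl ?kappa_t_ge0 //; lra.
  have := h_let; have := t_le1; rewrite /eball0 /= in zRs; lra.
have [p [px pv] Vp] := msupp_meets_hcubeX mk0.
have [/(_ j) p1r /(_ j) p2r] := supp_V_sub HV HV1 mur Vp.
have := ccube_coord_le j h_ge0 px; have := ccube_coord_le j (ltW t_gt0) pv.
rewrite -/t -/Cp in pv p2r *.
move: (xpt R k) (vpt R k') px pv => x v px pv.
have -> : (x + t *: v) ord0 j = x ord0 j + t * v ord0 j by rewrite !mxE.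
have := ler_normD (x ord0 j) (t * v ord0 j); rewrite normrM (gtr0_norm t_gt0).
have d0 : 0 <= d%:R :> R by rewrite ler0n.
have kappa_r : 1 + Cp * (1 + d%:R * (r - 1)) + t <= r * kappa.
  have := t_le1; have := Cp_ge0; rewrite /kappa; nra.
have := h_let; have := t_gt0; rewrite /kappa in kappa_r *; nra.
Qed.

Lemma supp_scheme_bound r : 1 <= r -> Rs + 2 <= r ->
  supp1 mu0 `<=` coord_ball d (r - 2) ->
  forall l, supp1 (mu l) `<=` coord_ball d (r * (1 + kappa * t) ^+ l - 1).
Proof.
move=> r1 rRs mu0r; elim=> [|l IHl].
  by rewrite expr0 mulr1; apply: subset_trans (supp_scheme0_bound mu0r) (coord_ball_le _); lra.
have grow : 1 <= (1 + kappa * t) ^+ l by rewrite exprn_ege1 // lerDl.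
have r_le : r <= r * (1 + kappa * t) ^+ l by rewrite ler_peMr //; lra.
by rewrite exprSr mulrA; apply: supp_schemeS_bound => //; lra.
Qed.

End LatticeSchemeBound.

Theorem corollary4p5 (R : realType) (d : nat)
  (V : Mplus R 'rV[R]_d -> Mplus R ('rV[R]_d * 'rV[R]_d)%type)
  (s : Mplus R 'rV[R]_d -> Mplus R 'rV[R]_d)
  (c : 'rV[R]_d -> Mplus R 'rV[R]_d -> R)
  (C_S : R) (C_F : R -> R) (L Rs C_b C_L : R)
  (* (V): pi_1 # V[mu] = mu *)
  (HV : forall (mu : Mplus R 'rV[R]_d) (A : set (Borel 'rV[R]_d)),
      measurable A -> V mu (A `*` setT) = mu A)
  (* (V1) *)
  (HV1 : forall mu : Mplus R 'rV[R]_d,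
      (ereal_sup [set (enorm p.2)%:E | p in supp2 (V mu)]
       <= C_S%:E * (1%:E + ereal_sup [set (enorm p.1)%:E | p in supp2 (V mu)]))%E)
  (* (V2) *)
  (HV2 : forall R' : R, 0 < R' -> forall mu nu : Mplus R 'rV[R]_d,
      supp1 mu `<=` eball0 R' -> supp1 nu `<=` eball0 R' ->
      (bl2 (V mu) (V nu) <= (C_F R')%:E * bl1 mu nu)%E)
  (* (S1), (S2) *)
  (HS1 : forall mu nu : Mplus R 'rV[R]_d,
      (bl1 (s mu) (s nu) <= L%:E * bl1 mu nu)%E)
  (HS2 : forall mu : Mplus R 'rV[R]_d, supp1 (s mu) `<=` eball0 Rs)
  (* (C1), (C2) *)
  (HC1 : forall x mu, `|c x mu| <= C_b)
  (HC2 : forall x y mu nu,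
      ((`|c x mu - c y nu|)%:E
       <= C_L%:E * ((enorm (x - y))%:E + bl1 mu nu))%E)
  (T : R) (hT : 0 < T)
  (mu0 : Mplus R 'rV[R]_d) (hmu0 : compact (supp1 mu0))
  (muN : nat -> nat -> Mplus R 'rV[R]_d)
  (hscheme : forall N : nat, (0 < N)%N -> lattice_scheme V s c mu0 N (muN N)) :
  exists K : set ('rV[R]_d * 'rV[R]_d)%type, compact K /\
    exists N0 : nat, forall N : nat, (N0 <= N)%N -> (0 < N)%N ->
      forall l : nat, l%:R / N%:R <= T ->
        supp2 (V (muN N l)) `<=` K.
Proof.
have [M mu0M] := compact_sub_coord_ball hmu0.
set Cp := Num.max C_S 0; set kappa := 2 + Cp + Cp * d%:R.
have kappa_ge0 : 0 <= kappa by rewrite !addr_ge0 ?mulr_ge0 ?le_max ?lexx ?orbT.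
set r := Num.max 1 (Num.max (Rs + 2) (M + 2)).
have [r1 rRs rM] : [/\ 1 <= r, Rs + 2 <= r & M + 2 <= r].
  by rewrite !le_max !lexx !orbT.
have mu0r : supp1 mu0 `<=` coord_ball d (r - 2).
  by apply: subset_trans mu0M (coord_ball_le _); lra.
set B := r * expR (kappa * T).
exists (coord_ball d B `*` coord_ball d (Cp * (1 + d%:R * B))); split.
  by apply: compact_setX; exact: coord_ball_compact.
exists 0%N => N _ N_gt0 l lT.
have rho_le : r * (1 + kappa * (1 / N%:R)) ^+ l - 1 <= B.
  have : (1 + kappa * (1 / N%:R)) ^+ l <= expR (kappa * T).
    apply: le_trans (exprn_1D_le_expR _ _) _; first by rewrite mulr_ge0 ?divr_ge0.
    by rewrite ler_expR mulrCA mul1r ler_wpM2l.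
  rewrite /B; nra.
have mu_l := supp_scheme_bound HV HV1 HS2 N_gt0 (hscheme N N_gt0) r1 rRs mu0r (l := l).
apply: subset_trans (supp_V_sub HV HV1 mu_l) _ => p [p1 p2].
split; first exact: coord_ball_le p1.
apply: coord_ball_le p2; rewrite ler_wpM2l ?le_max ?lexx ?orbT // lerD2l.
by rewrite ler_wpM2l ?ler0n.
Qed.
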